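(* Let $R_1,\dots,R_K$ be consolidated payoff matrices of $N$-player zero-sum polymatrix games sharing the same players $[N]$, edge set $E$ and action sets $[d_i]$. If a strategy profile $x^*=(x^{1*},\dots,x^{N*})$ is an ex-post equilibrium with respect to the uncertainty set $\{R_1,\dots,R_K\}$, then $x^*$ is an ex-post equilibrium with respect to the uncertainty set $\mathrm{conv}\{R_1,\dots,R_K\}$.
   Context: An $N$-player polymatrix game consists of players $[N]$, a set $E$ of unordered pairs $[i,j]$ of distinct players, finite action sets $[d_i]$, and for each $[i,j]\in E$ payoff matrices $A^{ij}\in\mathbb{R}^{d_i\times d_j}$, $A^{ji}\in\mathbb{R}^{d_j\times d_i}$. Player $i$ chooses $x^i\in\Delta_{d_i}=\{x\in\mathbb{R}^{d_i}:x\ge0,\ \mathbf{1}^Tx=1\}$ and receives $p_i=\sum_{j:[i,j]\in E}(x^i)^TA^{ij}x^j$; the game is zero-sum if $\sum_ip_i=0$ for all pure strategy profiles. The consolidated payoff matrix $R\in\mathbb{R}^{D\times D}$, $D=\sum_id_i$, has rows/columns indexed by $(i:a_i)$ with $R_{(i:a_i),(j:a_j)}=A^{ij}_{a_ia_j}$ if $[i,j]\in E$ and $0$ otherwise. A profile $x^*$ is an ex-post equilibrium with respect to a set $\mathcal{U}$ of such matrices if for every player $i$ and every $R\in\mathcal{U}$ (with blocks $A^{ij}$), $x^{i*}\in\arg\max_{x^i\in\Delta_{d_i}}\sum_{j:[i,j]\in E}(x^i)^TA^{ij}x^{j*}$. *)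

From mathcomp Require Import all_boot all_order all_algebra.
Set Implicit Arguments. Unset Strict Implicit. Unset Printing Implicit Defensive.
Import Order.TTheory GRing.Theory Num.Theory.
Local Open Scope ring_scope.

(* The edge set E is a symmetric irreflexive relation on players
   (an unordered pair [i,j] is in E iff E i j, equivalently E j i).
   The consolidated payoff matrix R (of size D x D, D = sum_i d_i) is
   represented by its blocks: R i j : 'M_(d i, d j) is the block with rows
   (i:a_i) and columns (j:a_j); it equals A^{ij} on edges and 0 elsewhere. *)

Definition blocks (R : ringType) (N : nat) (d : 'I_N -> nat) :=
  forall i j : 'I_N, 'M[R]_(d i, d j).

Definition polymatrix_on (R : ringType) (N : nat) (d : 'I_N -> nat)
  (E : rel 'I_N) (P : blocks R d) : Prop :=
  forall i j, ~~ E i j -> P i j = 0.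

Definition zero_sum (R : ringType) (N : nat) (d : 'I_N -> nat)
  (E : rel 'I_N) (P : blocks R d) : Prop :=
  forall a : forall i : 'I_N, 'I_(d i),
    \sum_(i < N) \sum_(j < N | E i j) P i j (a i) (a j) = 0.

Definition in_simplex (R : numDomainType) (n : nat) (x : 'cV[R]_n) : Prop :=
  (forall a, 0 <= x a 0) /\ \sum_(a < n) x a 0 = 1.

Definition payoff (R : ringType) (N : nat) (d : 'I_N -> nat)
  (E : rel 'I_N) (P : blocks R d) (i : 'I_N) (y : 'cV[R]_(d i))
  (x : forall j : 'I_N, 'cV[R]_(d j)) : R :=
  \sum_(j < N | E i j) ((y^T *m P i j *m x j) 0 0).

Definition ex_post_eq (R : numDomainType) (N : nat) (d : 'I_N -> nat)
  (E : rel 'I_N) (U : blocks R d -> Prop)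
  (x : forall j : 'I_N, 'cV[R]_(d j)) : Prop :=
  (forall i, in_simplex (x i)) /\
  forall (i : 'I_N) (P : blocks R d), U P ->
    forall y : 'cV[R]_(d i), in_simplex y ->
      payoff E P y x <= payoff E P (x i) x.

Definition finset_of (R : ringType) (N : nat) (d : 'I_N -> nat) (K : nat)
  (Rs : 'I_K -> blocks R d) : blocks R d -> Prop :=
  fun P => exists k, P = Rs k.

Definition conv_of (R : numDomainType) (N : nat) (d : 'I_N -> nat) (K : nat)
  (Rs : 'I_K -> blocks R d) : blocks R d -> Prop :=
  fun P => exists lam : 'I_K -> R,
    (forall k, 0 <= lam k) /\ \sum_(k < K) lam k = 1 /\
    forall i j, P i j = \sum_(k < K) lam k *: Rs k i j.

(** Each player's payoff is linear in the payoff matrix, so against a convex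
    combination of the [R_k] it is the same combination of the payoffs against
    the [R_k]; the equilibrium inequalities for the [R_k] then add up with
    nonnegative weights. *)

From mathcomp Require Import all_boot all_order all_algebra.
Import Order.TTheory GRing.Theory Num.Theory.
Local Open Scope ring_scope.

Lemma payoff_lincomb {R : comRingType} {N : nat} {d : 'I_N -> nat}
  (E : rel 'I_N) {K : nat} {Rs : 'I_K -> blocks R d} {lam : 'I_K -> R}
  {P : blocks R d} (HP : forall i j, P i j = \sum_(k < K) lam k *: Rs k i j)
  (i : 'I_N) (y : 'cV[R]_(d i)) (x : forall j : 'I_N, 'cV[R]_(d j)) :
  payoff E P y x = \sum_(k < K) lam k * payoff E (Rs k) y x.
Proof.
rewrite /payoff.
under eq_bigr => j _ do rewrite HP mulmx_sumr mulmx_suml summxE.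
rewrite exchange_big /=; apply: eq_bigr => k _.
rewrite mulr_sumr; apply: eq_bigr => j _.
by rewrite -scalemxAr -scalemxAl mxE.
Qed.

Theorem lemma2 (R : realFieldType) (N : nat) (d : 'I_N -> nat)
  (E : rel 'I_N) (E_sym : symmetric E) (E_irr : irreflexive E)
  (K : nat) (Rs : 'I_K -> blocks R d)
  (Rs_poly : forall k, polymatrix_on E (Rs k))
  (Rs_zs : forall k, zero_sum E (Rs k))
  (x : forall j : 'I_N, 'cV[R]_(d j)) :
  ex_post_eq E (finset_of Rs) x -> ex_post_eq E (conv_of Rs) x.
Proof.
move=> [x_simplex x_best]; split=> // i P [lam [lam_ge0 [_ defP]]] y y_simplex.
rewrite !(payoff_lincomb _ defP); apply: ler_sum => k _.
rewrite ler_wpM2l //; apply: x_best => //.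
by exists k.
Qed.
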